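(* A normal TDD is reduced if and only if none of the reduction rules RR1, RR2, RR3, RR4 is applicable to it.
   Context: Fix a finite index set $I$ with a linear order $\prec$. Indices take values in $\{0,1\}$; a tensor over $I$ is a map $\{0,1\}^I\to\mathbb{C}$ (tensors over subsets of $I$ are regarded as tensors over $I$ not depending on the other indices). Each index $x$ is regarded as the tensor $x(c)=c$, and $\overline{x}(c):=1-c$; operations on tensors are pointwise. A TDD over $I$ is $\mathcal F=(V,E,index,value,low,high,w)$: a rooted directed acyclic graph with finite node set $V$ partitioned into non-terminal nodes $V_N$ and terminal nodes $V_T$, root $r_{\mathcal F}$; $index:V_N\to I$; $value:V_T\to\mathbb{C}$; $low,high:V_N\to V$ (0- and 1-successors); edges are the low-edges $(v,low(v))$ and high-edges $(v,high(v))$, $v\in V_N$, plus a unique source-less incoming edge $e_r$ of the root; $w$ gives each edge a complex weight and $w_{\mathcal F}:=w(e_r)$. Node tensors: $\Phi(v)=value(v)$ for terminal $v$; otherwise $\Phi(v)=w_0\overline{x_v}\Phi(low(v))+w_1x_v\Phi(high(v))$ with $x_v=index(v)$ and $w_0,w_1$ the low-/high-edge weights. The TDD represents $\Phi(\mathcal F):=w_{\mathcal F}\Phi(r_{\mathcal F})$. Normality (w.r.t. $\prec$): the pivot of a tensor $\phi$ is the lexicographically smallest (compare at the $\prec$-smallest differing index, $0<1$) $\vec a$ with $|\phi(\vec a)|=\max_{\vec b}|\phi(\vec b)|$; $\phi$ is normal if $\phi=0$ or $\phi$ equals $1$ at its pivot. A TDD is normal if $\Phi(v)$ is normal for every node $v$.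 A TDD is reduced if it is normal and (1) $\Phi(v)\neq0$ for every node $v$; (2) all edges of weight $0$ point to the unique terminal node, which has value $1$; (3) $\Phi(u)\neq\Phi(v)$ for any two distinct nodes $u\neq v$. Reduction rules. RR1: merge all terminal nodes with value $1$; delete all terminal nodes with value $0$ (if any), redirect their incoming edges to the (unique) terminal node and reset the weights of these edges to $0$. RR2: redirect all weight-$0$ edges to the terminal node; if these include the incoming edge of the root, the terminal node becomes the new root; delete all nodes (and edges involving them) not reachable from the root. RR3: delete a node $v$ if its 0- and 1-successors are identical and its low- and high-edges have the same weight $w$ (either $0$ or $1$), redirecting its incoming edges to the terminal node with value $1$ if $w=0$ and otherwise to its successor. RR4: merge two nodes if they have the same index, the same 0- and 1-successors, and the same weights on the corresponding edges. *)

From HB Require Import structures.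
From mathcomp Require Import all_boot all_algebra.
From mathcomp Require Import reals complex.

Set Implicit Arguments.
Unset Strict Implicit.
Unset Printing Implicit Defensive.

Import GRing.Theory Num.Theory.
Local Open Scope ring_scope.

Section TDD.

Variable n : nat.
Variable C : numDomainType.
Variable V : finType.

(* Data attached to a node: a terminal node carries its value; a
   non-terminal node carries its index, its 0-successor (low), its
   1-successor (high), the weight of its low-edge and of its high-edge. *)
Inductive tnode :=
  | Term of C
  | Node of 'I_n & V & V & C & C.

Record tdd := TDD {
  root : V;
  root_w : C;
  kind : V -> tnode
}.

Variable F : tdd.

Definition succ : rel V := fun v u =>
  match kind F v with
  | Term _ => false
  | Node _ lo hi _ _ => (u == lo) || (u == hi)
  end.

Definition tdd_wf : Prop :=
  (forall v u, succ v u -> ~~ connect succ u v) /\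
  (forall v, connect succ (root F) v).

Definition ordered : Prop :=
  forall v x lo hi w0 w1, kind F v = Node x lo hi w0 w1 ->
  forall c, c \in [:: lo; hi] ->
    match kind F c with
    | Term _ => True
    | Node y _ _ _ _ => (x < y)%N
    end.

Definition assignment := {ffun 'I_n -> bool}.
Definition tensor := {ffun assignment -> C}.

(* Node tensors, by structural recursion with fuel; on an acyclic graph
   with #|V| nodes every path has at most #|V| nodes, so fuel #|V| computes
   Phi(v) = w0 * (1 - x_v) * Phi(low v) + w1 * x_v * Phi(high v),
   Phi(terminal) = value. *)
Fixpoint phi_fuel (k : nat) (v : V) : tensor :=
  match k with
  | 0 => [ffun _ => 0]
  | k'.+1 =>
    match kind F v with
    | Term c => [ffun _ => c]
    | Node x lo hi w0 w1 =>
        [ffun a : assignment =>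
           w0 * (1 - (a x)%:R) * phi_fuel k' lo a
         + w1 * (a x)%:R * phi_fuel k' hi a]
    end
  end.

Definition Phi (v : V) : tensor := phi_fuel #|V| v.

End TDD.

Section Normal.

Variable n : nat.
Variable C : numDomainType.

Definition lex_lt (a b : assignment n) : Prop :=
  exists i : 'I_n, (forall j : 'I_n, (j < i)%N -> a j = b j) /\
                   a i = false /\ b i = true.

Definition is_pivot (phi : tensor n C) (a : assignment n) : Prop :=
  (forall b, `|phi b| <= `|phi a|) /\
  (forall b, `|phi b| = `|phi a| -> a = b \/ lex_lt a b).

Definition normal_tensor (phi : tensor n C) : Prop :=
  phi = [ffun _ => 0] \/ exists a, is_pivot phi a /\ phi a = 1.

Variable V : finType.
Variable F : tdd n C V.

Definition normal_tdd : Prop := forall v, normal_tensor (Phi F v).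

Definition zero_edges_to (t : V) : Prop :=
  (root_w F = 0 -> root F = t) /\
  (forall v x lo hi w0 w1, kind F v = Node x lo hi w0 w1 ->
     (w0 = 0 -> lo = t) /\ (w1 = 0 -> hi = t)).

Definition reduced : Prop :=
  normal_tdd /\
  (forall v, Phi F v <> [ffun _ => 0]) /\
  (exists t, kind F t = Term _ _ 1 /\
             (forall u c, kind F u = Term _ _ c -> u = t) /\
             zero_edges_to t) /\
  (forall u v, u <> v -> Phi F u <> Phi F v).

(* Applicability of the reduction rules: the rule has an instance that
   actually changes the diagram. *)
Definition RR1_applicable : Prop :=
  (exists t, kind F t = Term _ _ 0) \/
  (exists t1 t2, t1 <> t2 /\ kind F t1 = Term _ _ 1 /\ kind F t2 = Term _ _ 1).

Definition RR2_applicable : Prop :=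
  (root_w F = 0 /\ kind F (root F) <> Term _ _ 1) \/
  (exists v x lo hi w0 w1, kind F v = Node x lo hi w0 w1 /\
     ((w0 = 0 /\ kind F lo <> Term _ _ 1) \/
      (w1 = 0 /\ kind F hi <> Term _ _ 1))).

Definition RR3_applicable : Prop :=
  exists v x u w, kind F v = Node x u u w w /\ (w = 0 \/ w = 1).

Definition RR4_applicable : Prop :=
  exists u v x lo hi w0 w1, u <> v /\
    kind F u = Node x lo hi w0 w1 /\ kind F v = Node x lo hi w0 w1.

End Normal.

From Pilot Require Import Defs.
From HB Require Import structures.
From mathcomp Require Import all_boot all_algebra.
From mathcomp Require Import reals complex.
From mathcomp Require Import order.
Import Order.TTheory GRing.Theory Num.Theory.
Local Open Scope ring_scope.

Set Implicit Arguments.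
Unset Strict Implicit.
Unset Printing Implicit Defensive.

(* Because indices increase along edges, the tensor of a node with index x
   splits as Phi(v)[x := 0] = w0 Phi(low v) and Phi(v)[x := 1] = w1 Phi(high v).
   A nonzero normal tensor is determined by its direction (its value at the
   pivot is 1), so from w Phi(c) = w' Phi(c') with Phi(c), Phi(c') normal and
   nonzero we get w = w' and, unless w = 0, Phi(c) = Phi(c').
   If no rule applies, RR1 leaves a unique terminal, of value 1, and RR2 sends
   every weight-0 edge to it. A node with zero tensor would then have two
   weight-0 edges to the terminal, an instance of RR3. Two distinct nodes
   with equal tensors, taken with minimal total depth, either have equal
   indices and then equal weights and successors (RR4), or one of them lies
   strictly below the level of the other, which then has both edges of
   weight 1 pointing to it (RR3). *)

Section Depth.

Variables (n : nat) (C : numDomainType) (V : finType) (F : tdd n C V).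
Hypothesis acyclic : forall v u, succ F v u -> ~~ connect (succ F) u v.

Definition depth (v : V) := #|[set u | connect (succ F) v u]|.

Lemma depth_gt0 v : (0 < depth v)%N.
Proof. by apply/card_gt0P; exists v; rewrite inE connect0. Qed.

Lemma depth_le_card v : (depth v <= #|V|)%N.
Proof. exact: max_card. Qed.

Lemma depth_succ v u : succ F v u -> (depth u < depth v)%N.
Proof.
move=> vu; apply: proper_card; apply/properP; split.
  by apply/subsetP => z; rewrite !inE; apply: connect_trans (connect1 vu).
by exists v; rewrite inE ?connect0 ?acyclic.
Qed.

Lemma succ_low v x lo hi w0 w1 : kind F v = Node x lo hi w0 w1 -> succ F v lo.
Proof. by rewrite /succ => ->; rewrite eqxx. Qed.

Lemma succ_high v x lo hi w0 w1 : kind F v = Node x lo hi w0 w1 -> succ F v hi.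
Proof. by rewrite /succ => ->; rewrite eqxx orbT. Qed.

Lemma tdd_ind (P : V -> Prop) :
  (forall v c, kind F v = Term n V c -> P v) ->
  (forall v x lo hi w0 w1, kind F v = Node x lo hi w0 w1 -> P lo -> P hi -> P v) ->
  forall v, P v.
Proof.
move=> Pterm Pnode v; have [k] := ubnP (depth v); elim: k v => // k IH v.
rewrite ltnS => dv; case Ev: (kind F v) => [c|x lo hi w0 w1]; first exact: Pterm Ev.
apply: (Pnode _ _ _ _ _ _ Ev); apply: IH; apply: leq_trans dv.
  exact/depth_succ/(succ_low Ev).
exact/depth_succ/(succ_high Ev).
Qed.

Lemma depth2_ind (P : V -> V -> Prop) :
  (forall u v, (forall u' v', (depth u' + depth v' < depth u + depth v)%N ->
                P u' v') -> P u v) ->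
  forall u v, P u v.
Proof.
move=> step u v; have [k] := ubnP (depth u + depth v); elim: k u v => // k IH u v.
by rewrite ltnS => duv; apply: step => u' v' lt; apply: IH; apply: leq_trans duv.
Qed.

Lemma phi_fuel_stable k1 k2 v :
  (depth v <= k1)%N -> (depth v <= k2)%N -> phi_fuel F k1 v = phi_fuel F k2 v.
Proof.
elim: k1 k2 v => [|k1 IH] [|k2] v dv1 dv2;
  rewrite ?leqn0 ?(gtn_eqF (depth_gt0 v)) // in dv1 dv2.
rewrite /=; case Ev: (kind F v) => [//|x lo hi w0 w1].
have dlo := depth_succ (succ_low Ev); have dhi := depth_succ (succ_high Ev).
by rewrite (IH k2 lo) ?(IH k2 hi) // -ltnS ?(leq_trans dlo) ?(leq_trans dhi).
Qed.

Lemma Phi_term v c : kind F v = Term n V c -> Phi F v = [ffun _ => c].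
Proof.
move=> Ev; rewrite /Phi; have : (0 < #|V|)%N by apply/card_gt0P; exists v.
by case: #|V| => //= k _; rewrite Ev.
Qed.

Lemma Phi_node v x lo hi w0 w1 : kind F v = Node x lo hi w0 w1 ->
  Phi F v = [ffun a : assignment n => w0 * (1 - (a x)%:R) * Phi F lo a
                                    + w1 * (a x)%:R * Phi F hi a].
Proof.
move=> Ev; rewrite /Phi; have := depth_le_card v.
case: #|V| (depth_gt0 v) => [|k] dv0 dvk; first by rewrite leqn0 gtn_eqF in dvk.
have dlo := depth_succ (succ_low Ev); have dhi := depth_succ (succ_high Ev).
rewrite /= Ev (@phi_fuel_stable k k.+1 lo) ?(@phi_fuel_stable k k.+1 hi) //.
all: by rewrite -ltnS ?(leq_trans dlo) ?(leq_trans dhi) // ltnW.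
Qed.

End Depth.

Section Cofactors.

Variables (n : nat) (C : numDomainType) (V : finType) (F : tdd n C V).
Hypothesis acyclic : forall v u, succ F v u -> ~~ connect (succ F) u v.
Hypothesis ordered_F : ordered F.

Definition below (i : 'I_n) (v : V) : bool :=
  if kind F v is Node y _ _ _ _ then (i < y)%N else true.

Definition set_bit (a : assignment n) (i : 'I_n) (b : bool) : assignment n :=
  [ffun j => if j == i then b else a j].

Lemma below_low v x lo hi w0 w1 : kind F v = Node x lo hi w0 w1 -> below x lo.
Proof.
by move=> Ev; move: (ordered_F Ev (mem_head lo [:: hi])); rewrite /below; case: kind.
Qed.

Lemma below_high v x lo hi w0 w1 : kind F v = Node x lo hi w0 w1 -> below x hi.
Proof.
move=> Ev; have hi_in : hi \in [:: lo; hi] by rewrite !inE eqxx orbT.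
by move: (ordered_F Ev hi_in); rewrite /below; case: kind.
Qed.

Lemma below_trans (i x : 'I_n) v : (i < x)%N -> below x v -> below i v.
Proof. by rewrite /below; case: kind => // y _ _ _ _; apply: ltn_trans. Qed.

Lemma Phi_set_bit i b a v : below i v -> Phi F v (set_bit a i b) = Phi F v a.
Proof.
elim/(tdd_ind acyclic): v => [v c Ev|v y lo hi w0 w1 Ev IHlo IHhi] iv.
  by rewrite (Phi_term Ev) !ffunE.
move: iv; rewrite /below Ev => iy.
have /negbTE yi : y != i by rewrite -val_eqE /= gtn_eqF.
rewrite (Phi_node acyclic Ev) !ffunE yi.
by rewrite IHlo ?IHhi ?(below_trans iy) ?(below_low Ev) ?(below_high Ev).
Qed.

Lemma Phi_low v x lo hi w0 w1 : kind F v = Node x lo hi w0 w1 ->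
  forall a, Phi F v (set_bit a x false) = w0 * Phi F lo a.
Proof.
move=> Ev a; rewrite (Phi_node acyclic Ev) ffunE (Phi_set_bit _ _ (below_low Ev)).
by rewrite ffunE eqxx subr0 mulr1 mulr0 mul0r addr0.
Qed.

Lemma Phi_high v x lo hi w0 w1 : kind F v = Node x lo hi w0 w1 ->
  forall a, Phi F v (set_bit a x true) = w1 * Phi F hi a.
Proof.
move=> Ev a; rewrite (Phi_node acyclic Ev) ffunE (Phi_set_bit _ _ (below_high Ev)).
by rewrite ffunE eqxx subrr mulr0 mul0r add0r mulr1.
Qed.

End Cofactors.

Section NormalTensors.

Variables (n : nat) (C : numFieldType).
Implicit Types (phi psi : tensor n C) (a b : assignment n).

Lemma lex_lt_asym a b : lex_lt a b -> ~ lex_lt b a.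
Proof.
case=> [i [lt_i [ai bi]]] [j [lt_j [bj aj]]].
case: (ltngtP i j) => [ij|ji|/val_inj ij].
- by move: (lt_j i ij); rewrite ai bi.
- by move: (lt_i j ji); rewrite aj bj.
- by move: aj; rewrite -ij ai.
Qed.

Lemma pivot_scale phi psi c a b : c != 0 -> (forall z, phi z = c * psi z) ->
  is_pivot phi a -> is_pivot psi b -> a = b.
Proof.
move=> c0 phi_psi [max_a min_a] [max_b min_b].
have normc : 0 < `|c| by rewrite normr_gt0.
have norm_phi z : `|phi z| = `|c| * `|psi z| by rewrite phi_psi normrM.
have ab : `|psi a| = `|psi b|.
  by apply/eqP; rewrite eq_le max_b -(ler_pM2l normc) -!norm_phi max_a.
have ba : `|phi b| = `|phi a| by rewrite !norm_phi ab.
case: (min_a b ba) => // lt_ab; case: (min_b a ab) => // lt_ba.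
by case: (lex_lt_asym lt_ab).
Qed.

Lemma nonzero_entry phi : phi <> [ffun _ => 0] -> exists a, phi a != 0.
Proof.
move=> phi_neq0; case: (pickP (fun a => phi a != 0)) => [a ?|phi0]; first by exists a.
by case: phi_neq0; apply/ffunP => a; rewrite ffunE; apply/eqP/negbFE/phi0.
Qed.

Lemma scale_tensor_eq0 w phi :
  phi <> [ffun _ => 0] -> (forall a, w * phi a = 0) -> w = 0.
Proof.
case/nonzero_entry => a phi_a /(_ a)/eqP.
by rewrite mulf_eq0 (negbTE phi_a) orbF => /eqP.
Qed.

Lemma normal_const (c : C) :
  normal_tensor [ffun _ : assignment n => c] -> c = 0 \/ c = 1.
Proof.
case=> [/ffunP /(_ [ffun=> false])|[a [_]]]; rewrite !ffunE; by [left | right].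
Qed.

(* Nonzero normal tensors are the canonical representatives of their lines. *)
Lemma normal_proportional phi psi w w' :
  normal_tensor phi -> normal_tensor psi ->
  phi <> [ffun _ => 0] -> psi <> [ffun _ => 0] ->
  (forall a, w * phi a = w' * psi a) -> w = w' /\ (w = 0 \/ phi = psi).
Proof.
move=> [//|[a [piv_a phi_a]]] [//|[b [piv_b psi_b]]] phi0 psi0 w_w'.
have [w0|w_neq0] := eqVneq w 0.
  suff -> : w' = 0 by split; [|left].
  by apply: scale_tensor_eq0 psi0 _ => z; rewrite -w_w' w0 mul0r.
have w'_neq0 : w' != 0.
  apply: contra_neq w_neq0 => w'0.
  by apply: scale_tensor_eq0 phi0 _ => z; rewrite w_w' w'0 mul0r.
pose c := w' / w.
have phi_psi z : phi z = c * psi z by rewrite /c mulrAC -w_w' mulrC mulKf.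
have ab : a = b.
  by apply: (pivot_scale _ phi_psi piv_a piv_b); rewrite mulf_neq0 ?invr_neq0.
have c1 : c = 1 by rewrite -phi_a phi_psi ab psi_b mulr1.
split; first by rewrite -[w'](divfK w_neq0) -/c c1 mul1r.
by right; apply/ffunP => z; rewrite phi_psi c1 mul1r.
Qed.

End NormalTensors.

Section ReducedIrreducible.

Variables (n : nat) (C : numDomainType) (V : finType) (F : tdd n C V).
Hypothesis acyclic : forall v u, succ F v u -> ~~ connect (succ F) u v.
Hypothesis reduced_F : reduced F.

Lemma reduced_noRR1 : ~ RR1_applicable F.
Proof.
case: reduced_F => _ [Phi_neq0 [[t [_ [eq_t _]]] _]].
case=> [[v /Phi_term /Phi_neq0 //]|[t1 [t2 [t12 [/eq_t t1_t /eq_t t2_t]]]]].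
by apply: t12; rewrite t1_t t2_t.
Qed.

Lemma reduced_noRR2 : ~ RR2_applicable F.
Proof.
case: reduced_F => _ [_ [[t [kind_t [_ [root_t node_t]]]] _]].
case=> [[/root_t -> []]|[v [x [lo [hi [w0 [w1 [/node_t [lo_t hi_t]]]]]]]]] //.
by case=> [[/lo_t -> []]|[/hi_t -> []]].
Qed.

Lemma reduced_noRR3 : ~ RR3_applicable F.
Proof.
case: reduced_F => _ [Phi_neq0 [_ Phi_inj]].
case=> v [x [u [w [Ev [w0|w1]]]]]; subst w.
  apply: (Phi_neq0 v); apply/ffunP => a.
  by rewrite (Phi_node acyclic Ev) !ffunE !mul0r addr0.
have u_neq_v : v <> u.
  by move=> vu; move: (acyclic (succ_low Ev)); rewrite vu connect0.
apply: (Phi_inj _ _ u_neq_v); apply/ffunP => a.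
by rewrite (Phi_node acyclic Ev) ffunE !mul1r -mulrDl subrK mul1r.
Qed.

Lemma reduced_noRR4 : ~ RR4_applicable F.
Proof.
case: reduced_F => _ [_ [_ Phi_inj]].
case=> u [v [x [lo [hi [w0 [w1 [uv [Eu Ev]]]]]]]].
by apply: (Phi_inj _ _ uv); rewrite (Phi_node acyclic Eu) (Phi_node acyclic Ev).
Qed.

End ReducedIrreducible.

Section IrreducibleReduced.

Variables (n : nat) (C : numFieldType) (V : finType) (F : tdd n C V).
Hypothesis acyclic : forall v u, succ F v u -> ~~ connect (succ F) u v.
Hypothesis ordered_F : ordered F.
Hypothesis normal_F : normal_tdd F.
Hypothesis noRR1 : ~ RR1_applicable F.
Hypothesis noRR2 : ~ RR2_applicable F.
Hypothesis noRR3 : ~ RR3_applicable F.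
Hypothesis noRR4 : ~ RR4_applicable F.

Lemma terminal_value v c : kind F v = Term n V c -> c = 1.
Proof.
move=> Ev; have := normal_F v; rewrite (Phi_term Ev) => /normal_const [c0|//].
by case: noRR1; left; exists v; rewrite Ev c0.
Qed.

Lemma terminal_unique u v cu cv :
  kind F u = Term n V cu -> kind F v = Term n V cv -> u = v.
Proof.
move=> Eu Ev; have [//|uv] := eqVneq u v.
case: noRR1; right; exists u, v; split; first exact/eqP.
by rewrite Eu Ev (terminal_value Eu) (terminal_value Ev).
Qed.

Lemma terminal_exists : exists t, kind F t = Term n V 1.
Proof.
elim/(tdd_ind acyclic): (Defs.root F) => [v c Ev|v x lo hi w0 w1 _ //].
by exists v; rewrite Ev (terminal_value Ev).
Qed.

Variable t : V.
Hypothesis kind_t : kind F t = Term n V 1.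

Lemma eq_terminal u : ~ kind F u <> Term n V 1 -> u = t.
Proof.
case Eu: (kind F u) => [c|] u_term; first exact: terminal_unique Eu kind_t.
by case: u_term.
Qed.

Lemma zero_edges : zero_edges_to F t.
Proof.
split=> [rw0|v x lo hi w0 w1 Ev]; first by apply: eq_terminal => ?; apply: noRR2; left.
split=> w_0; apply: eq_terminal => ?; apply: noRR2; right.
  by exists v, x, lo, hi, w0, w1; split=> //; left.
by exists v, x, lo, hi, w0, w1; split=> //; right.
Qed.

Lemma Phi_neq0 v : Phi F v <> [ffun _ => 0].
Proof.
elim/(tdd_ind acyclic): v => [v c Ev|v x lo hi w0 w1 Ev Phi_lo Phi_hi Phi_v].
  rewrite (Phi_term Ev) (terminal_value Ev) => /ffunP /(_ [ffun=> false]) /eqP.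
  by rewrite !ffunE oner_eq0.
have w0_0 : w0 = 0.
  apply: scale_tensor_eq0 Phi_lo _ => a.
  by rewrite -(Phi_low acyclic ordered_F Ev) Phi_v ffunE.
have w1_0 : w1 = 0.
  apply: scale_tensor_eq0 Phi_hi _ => a.
  by rewrite -(Phi_high acyclic ordered_F Ev) Phi_v ffunE.
have [lo_t hi_t] := zero_edges.2 _ _ _ _ _ _ Ev.
apply: noRR3; exists v, x, t, 0; split; last by left.
by rewrite Ev (lo_t w0_0) (hi_t w1_0) w0_0 w1_0.
Qed.

Lemma weighted_child_eq w w' c c' :
  (forall a, w * Phi F c a = w' * Phi F c' a) ->
  (w = 0 -> c = t) -> (w' = 0 -> c' = t) ->
  (Phi F c = Phi F c' -> c = c') -> w = w' /\ c = c'.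
Proof.
move=> w_w' c_t c'_t Phi_c_inj.
have [ww' [w0|/Phi_c_inj]] := normal_proportional (normal_F c) (normal_F c')
  (@Phi_neq0 c) (@Phi_neq0 c') w_w'; last by [].
by rewrite (c_t w0) c'_t -?ww'.
Qed.

Lemma Phi_neq_below u v x lo hi w0 w1 :
  kind F u = Node x lo hi w0 w1 -> below F x v ->
  (Phi F lo = Phi F v -> lo = v) -> (Phi F hi = Phi F v -> hi = v) ->
  Phi F u <> Phi F v.
Proof.
move=> Eu xv Phi_lo_inj Phi_hi_inj Phi_uv.
have [lo_t hi_t] := zero_edges.2 _ _ _ _ _ _ Eu.
have one_neq0 : (1 : C) = 0 -> v = t by move/eqP; rewrite oner_eq0.
have [w0_1 lo_v] : w0 = 1 /\ lo = v.
  apply: weighted_child_eq lo_t one_neq0 Phi_lo_inj => a.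
  by rewrite -(Phi_low acyclic ordered_F Eu) Phi_uv Phi_set_bit ?mul1r.
have [w1_1 hi_v] : w1 = 1 /\ hi = v.
  apply: weighted_child_eq hi_t one_neq0 Phi_hi_inj => a.
  by rewrite -(Phi_high acyclic ordered_F Eu) Phi_uv Phi_set_bit ?mul1r.
apply: noRR3; exists u, x, v, 1; split; last by right.
by rewrite Eu lo_v hi_v w0_1 w1_1.
Qed.

Lemma Phi_eq_same_index u v x lo hi w0 w1 lo' hi' w0' w1' :
  kind F u = Node x lo hi w0 w1 -> kind F v = Node x lo' hi' w0' w1' ->
  (Phi F lo = Phi F lo' -> lo = lo') -> (Phi F hi = Phi F hi' -> hi = hi') ->
  Phi F u = Phi F v -> u = v.
Proof.
move=> Eu Ev Phi_lo_inj Phi_hi_inj Phi_uv.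
have [lo_t hi_t] := zero_edges.2 _ _ _ _ _ _ Eu.
have [lo'_t hi'_t] := zero_edges.2 _ _ _ _ _ _ Ev.
have [w0_eq lo_eq] : w0 = w0' /\ lo = lo'.
  apply: weighted_child_eq lo_t lo'_t Phi_lo_inj => a.
  by rewrite -(Phi_low acyclic ordered_F Eu) -(Phi_low acyclic ordered_F Ev) Phi_uv.
have [w1_eq hi_eq] : w1 = w1' /\ hi = hi'.
  apply: weighted_child_eq hi_t hi'_t Phi_hi_inj => a.
  by rewrite -(Phi_high acyclic ordered_F Eu) -(Phi_high acyclic ordered_F Ev) Phi_uv.
have [//|uv] := eqVneq u v.
case: noRR4; exists u, v, x, lo, hi, w0, w1; split; first exact/eqP.
by split=> //; rewrite Ev -lo_eq -hi_eq -w0_eq -w1_eq.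
Qed.

Lemma Phi_inj : injective (Phi F).
Proof.
apply: (@depth2_ind _ _ _ F (fun u v => Phi F u = Phi F v -> u = v)).
move=> u v IH Phi_uv.
have u_not_above x lo hi w0 w1 : kind F u = Node x lo hi w0 w1 -> ~ below F x v.
  move=> Eu xv; apply: (Phi_neq_below Eu xv _ _ Phi_uv) => Phi_eq; apply: IH Phi_eq.
    by rewrite ltn_add2r (depth_succ acyclic (succ_low Eu)).
  by rewrite ltn_add2r (depth_succ acyclic (succ_high Eu)).
have v_not_above y lo hi w0 w1 : kind F v = Node y lo hi w0 w1 -> ~ below F y u.
  move=> Ev yu; apply: (Phi_neq_below Ev yu _ _ (esym Phi_uv)) => Phi_eq.
    by apply/esym/IH; rewrite ?ltn_add2l ?(depth_succ acyclic (succ_low Ev)).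
  by apply/esym/IH; rewrite ?ltn_add2l ?(depth_succ acyclic (succ_high Ev)).
case Eu: (kind F u) => [cu|x lo hi w0 w1];
  case Ev: (kind F v) => [cv|y lo' hi' w0' w1'].
- exact: terminal_unique Eu Ev.
- by case: (v_not_above _ _ _ _ _ Ev); rewrite /below Eu.
- by case: (u_not_above _ _ _ _ _ Eu); rewrite /below Ev.
case: (ltngtP x y) => [xy|yx|/val_inj xy].
- by case: (u_not_above _ _ _ _ _ Eu); rewrite /below Ev.
- by case: (v_not_above _ _ _ _ _ Ev); rewrite /below Eu.
subst y; have dlo := depth_succ acyclic (succ_low Eu).
have dhi := depth_succ acyclic (succ_high Eu).
have dlo' := depth_succ acyclic (succ_low Ev).
have dhi' := depth_succ acyclic (succ_high Ev).
apply: (Phi_eq_same_index Eu Ev _ _ Phi_uv) => /IH; apply.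
  by rewrite -addSn (leq_add dlo (ltnW dlo')).
by rewrite -addSn (leq_add dhi (ltnW dhi')).
Qed.

Lemma reduced_of_irreducible : reduced F.
Proof.
split=> //; split; first exact: Phi_neq0.
split; last by move=> u v uv /Phi_inj.
exists t; split=> //; split; last exact: zero_edges.
by move=> u c Eu; apply: terminal_unique Eu kind_t.
Qed.

End IrreducibleReduced.

Theorem theorem4 (R : realType) (n : nat) (V : finType)
    (F : tdd n (complex R) V) :
  tdd_wf F -> ordered F -> normal_tdd F ->
  (reduced F <->
   (~ RR1_applicable F /\ ~ RR2_applicable F /\
    ~ RR3_applicable F /\ ~ RR4_applicable F)).
Proof.
move=> [acyclic _] ordered_F normal_F.
split=> [reduced_F|[noRR1 [noRR2 [noRR3 noRR4]]]].
  by split; [|split; [|split]];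
    [exact: reduced_noRR1 | exact: reduced_noRR2
    | exact: reduced_noRR3 | exact: reduced_noRR4].
have [t kind_t] := terminal_exists acyclic normal_F noRR1.
exact: (reduced_of_irreducible acyclic ordered_F normal_F
          noRR1 noRR2 noRR3 noRR4 kind_t).
Qed.
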